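(* Let $\mathcal{A}=\{A_1,\dots,A_m\}$ be a bimodal collection of pairwise disjoint nonempty subsets of a finite abelian group $G$, with internal difference groups $H_1,\dots,H_m$, labelled so that $|A_i|<|H_i|$ exactly for $i=1,\dots,r$, where $r\ge2$. Let $D=(a_1+H_1)\setminus A_1$, where $a_1+H_1$ is the coset of $H_1$ containing $A_1$, and suppose $\mathcal{A}$ is in canonical position, i.e. $D$ is a subgroup of $G$. Let $A=A_1\cup\dots\cup A_m$ and $H=H_1+\dots+H_r$. Then: (1) $H_1,\dots,H_r$ form an $r$-star with kernel $D$ (i.e. $H_i\cap H_j=D$ for all distinct $i,j\le r$), and $A_i=H_i\setminus D$ for each $1\le i\le r$; (2) every $A_i$ with $i>r$ is a coset of a subgroup of $D$; (3) $H\setminus D\subseteq A$, and the sets in $\mathcal{A}$ with index greater than $r$ can be relabelled so that for some $k$ with $r\le k\le m$ the set $H\setminus D$ is partitioned by $A_1,\dots,A_k$; (4) if $k<m$, then the sets $A_i$ with $i>k$ arise from a subdivision of cosets of $H$, i.e. their union is a union of cosets of $H$ and each of them is a coset of a subgroup of $G$ contained in a single coset of $H$.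
   Context: $G$ is written additively. The internal difference group $H_i$ of $A_i$ is the subgroup generated by all $x-y$ with $x,y\in A_i$; $A_i$ lies in a single coset of $H_i$ and $|A_i|\le|H_i|$. A collection $\{A_1,\dots,A_m\}$ of pairwise disjoint subsets of $G$ is bimodal if for every $i$ and every $\delta\in G\setminus\{0\}$, the number $N_i(\delta)$ of pairs $(a,b)$ with $a\in A_i$, $b\in A_j$ for some $j\neq i$, and $a-b=\delta$, satisfies $N_i(\delta)\in\{0,|A_i|\}$. (For such collections with $r\ge2$ the set $D$ equals $(a_i+H_i)\setminus A_i$ for every $i\le r$ and is a coset of a subgroup; canonical position means the collection has been translated so that $D$ is a subgroup.) *)

From mathcomp Require Import all_boot all_order all_algebra all_fingroup.
Set Implicit Arguments. Unset Strict Implicit. Unset Printing Implicit Defensive.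
Import GRing.Theory.
Local Open Scope ring_scope.

(* G : finZmodType is a finite abelian group written additively; it carries
   MathComp's canonical finGroupType structure whose "multiplication" is +
   (zmodMgE), so {group G} are exactly the (additive) subgroups of G. *)

Section Defs.
Variable G : finZmodType.

Definition coset_add (x : G) (S : {set G}) : {set G} := [set x + s | s in S].

Definition diff_group (A : {set G}) : {set G} :=
  <<[set x - y | x in A, y in A]>>%g.

Definition Ncount (m : nat) (A : 'I_m -> {set G}) (i : 'I_m) (d : G) : nat :=
  #|[set p : G * G | [&& p.1 \in A i,
                         [exists j : 'I_m, (j != i) && (p.2 \in A j)] &
                         p.1 - p.2 == d]]|.

Definition bimodal (m : nat) (A : 'I_m -> {set G}) : Prop :=
  (forall i j : 'I_m, i != j -> [disjoint A i & A j]) /\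
  (forall (i : 'I_m) (d : G), d != 0 ->
     Ncount A i d = 0%N \/ Ncount A i d = #|A i|).

(* sum H_1 + ... + H_r of the first r difference groups (0-based indices < r) *)
Definition sum_diff_groups (m r : nat) (A : 'I_m -> {set G}) : {set G} :=
  <<\bigcup_(i : 'I_m | (i < r)%N) diff_group (A i)>>%g.

End Defs.

From mathcomp Require Import all_boot all_order all_algebra all_fingroup.
Import GRing.Theory.
Set Implicit Arguments. Unset Strict Implicit. Unset Printing Implicit Defensive.
Local Open Scope ring_scope.

(* Write U for the union of the A_i.  The counting condition of bimodality
   says that U \ A_i is periodic under H_i; hence U meets the coset a + H_i
   of A_i only in A_i, and the gaps of U outside that coset are H_i-periodic.
   For deficient A_i, A_j (|A_i| < |H_i|), translating a gap of a + H_i by an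
   element of H_j \ H_i would push all of A_i into b + H_j, so every gap of
   a + H_i lies in b + H_j: all deficient cosets have the same gaps, namely D,
   and in canonical position a + H_i = H_i.  A non-deficient A_i is a full
   coset, so the complement of U is H_i-periodic, which forces H_i into D.
   Finally the gaps outside D are periodic under every deficient H_i, hence
   under H; this gives H \ D in U and the H-periodicity of the sets A_i that
   do not lie in H. *)

(* s enumerates first the i satisfying p, then the others, each in increasing
   order; as p holds on the first r indices, these are fixed. *)
Lemma perm_pred_prefix (m r : nat) (p : pred 'I_m) : (r <= m)%N ->
    (forall i : 'I_m, (i < r)%N -> p i) ->
  exists (k : nat) (s : {perm 'I_m}),
    [/\ (r <= k <= m)%N, (forall i : 'I_m, (i < r)%N -> s i = i)
      & forall i : 'I_m, p (s i) = (i < k)%N].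
Proof.
move=> le_rm p_r; set e := enum 'I_m.
set L1 := filter p e; set L2 := filter (predC p) e.
have size_e : size e = m by rewrite -cardE card_ord.
have /tuple_permP[s sE] : perm_eq (L1 ++ L2) (ord_tuple m) by rewrite perm_filterC.
have {}sE (j : 'I_m) : s j = nth j (L1 ++ L2) j.
  rewrite sE /= (nth_map j) ?nth_ord_enum ?tnth_ord_tuple //.
  by rewrite -cardE card_ord.
have size_L : size (L1 ++ L2) = m.
  by rewrite -[RHS]size_e; apply: perm_size; rewrite perm_filterC.
have size_take : size (take r e) = r by rewrite size_takel // size_e.
have L1E : L1 = take r e ++ filter p (drop r e).
  rewrite /L1 -{1}(cat_take_drop r e) filter_cat; congr (_ ++ _).
  apply/all_filterP/allP => x x_take; apply: p_r.
  have lt_xr : (index x (take r e) < r)%N by rewrite -{2}size_take index_mem.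
  have := nth_index x x_take; rewrite nth_take // => <-.
  by rewrite /e nth_enum_ord // (leq_trans lt_xr).
have le_r_L1 : (r <= size L1)%N by rewrite L1E size_cat size_take leq_addr.
exists (size L1), s; split.
- by rewrite le_r_L1 -[X in (_ <= X)%N]size_L size_cat leq_addr.
- move=> i lt_ir; apply: val_inj; rewrite sE nth_cat (leq_trans lt_ir le_r_L1).
  by rewrite L1E nth_cat size_take lt_ir nth_take // /e nth_ord_enum.
- move=> i; rewrite sE nth_cat; case: ifP => lt_i_L1.
    by have := mem_nth i lt_i_L1; rewrite mem_filter => /andP[].
  have lt_i_L2 : (i - size L1 < size L2)%N.
    by rewrite ltn_subLR -?size_cat ?size_L // leqNgt lt_i_L1.
  by have := mem_nth i lt_i_L2; rewrite mem_filter => /andP[/negbTE].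
Qed.

Lemma mem_bigcup (T I : finType) (F : I -> {set T}) i x :
  x \in F i -> x \in \bigcup_j F j.
Proof. by move=> Fix; apply/bigcupP; exists i. Qed.

Section AdditiveGroups.
Variable G : finZmodType.
Implicit Types (S T : {set G}) (K : {group G}) (a b x y h : G).

Lemma zgroup0 K : (0 : G) \in K.
Proof. exact: group1. Qed.

Lemma zgroupD K x y : x \in K -> y \in K -> x + y \in K.
Proof. exact: groupM. Qed.

Lemma zgroupN K x : (- x \in K) = (x \in K).
Proof. exact: groupV. Qed.

Lemma zgroupB K x y : x \in K -> y \in K -> x - y \in K.
Proof. by move=> Kx Ky; rewrite zgroupD ?zgroupN. Qed.

Lemma zgroupDr K x y : x \in K -> (y + x \in K) = (y \in K).
Proof. exact: groupMr. Qed.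

Lemma in_coset_add a x K : (x \in coset_add a K) = (x - a \in K).
Proof.
apply/imsetP/idP => [[h Kh ->]|Kxa]; first by rewrite addrC addKr.
by exists (x - a) => //; rewrite addrC subrK.
Qed.

Lemma card_coset_add a S : #|coset_add a S| = #|S|.
Proof. exact/card_imset/addrI. Qed.

Lemma coset_add_refl a K : a \in coset_add a K.
Proof. by rewrite in_coset_add subrr zgroup0. Qed.

Lemma coset_addDr a K x h : x \in coset_add a K ->
  (x + h \in coset_add a K) = (h \in K).
Proof. by rewrite !in_coset_add addrAC => Kxa; rewrite [_ + h]addrC zgroupDr. Qed.

Lemma coset_addB a K x y : x \in coset_add a K -> y \in coset_add a K -> y - x \in K.
Proof. by move=> ax; rewrite -(coset_addDr _ ax) subrKC. Qed.

Lemma coset_add_id a K : a \in K -> coset_add a K = K.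
Proof. by move=> Ka; apply/setP => x; rewrite in_coset_add zgroupDr ?zgroupN. Qed.

Lemma coset_addS a S T : S \subset T -> coset_add a S \subset coset_add a T.
Proof. exact: imsetS. Qed.

Lemma mem_diff_group S x y : x \in S -> y \in S -> x - y \in diff_group S.
Proof. by move=> Sx Sy; apply/mem_gen/imset2P; exists x y. Qed.

Lemma sub_coset_diff_group a S : a \in S -> S \subset coset_add a (diff_group S).
Proof. by move=> Sa; apply/subsetP => x Sx; rewrite in_coset_add mem_diff_group. Qed.

Lemma coset_diff_groupE a S : (#|diff_group S| <= #|S|)%N -> a \in S ->
  S = coset_add a (diff_group S).
Proof.
move=> le_HS Sa; apply/eqP; rewrite eqEcard sub_coset_diff_group //.
by rewrite card_coset_add.
Qed.

Lemma coset_add_eq a b K : a \in coset_add b K -> coset_add a K = coset_add b K.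
Proof.
rewrite in_coset_add => Kab; apply/setP => x; rewrite [RHS]in_coset_add.
have -> : x - b = x - a + (a - b) by rewrite addrA subrK.
by rewrite in_coset_add (zgroupDr _ Kab).
Qed.

Lemma diff_group_sub_coset b S K : S \subset coset_add b K -> diff_group S \subset K.
Proof.
move=> /subsetP S_bK; rewrite gen_subG; apply/subsetP => _ /imset2P[x y Sx Sy ->].
have := S_bK x Sx; have := S_bK y Sy; rewrite !in_coset_add => Kyb Kxb.
by have := zgroupB Kxb Kyb; rewrite opprB addrA subrK.
Qed.

Definition periodic S T : Prop := forall x h, x \in S -> h \in T -> x + h \in S.

Lemma periodic_gen S T : periodic S T -> periodic S <<T>>%g.
Proof.
move=> perST; pose P := [set h | [forall x in S, x + h \in S]].
have P_group : group_set P.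
  apply/group_setP; split=> [|u v]; rewrite !inE.
    by apply/forall_inP => x Sx; rewrite [_ + _]addr0.
  move=> /forall_inP Pu /forall_inP Pv; apply/forall_inP => x Sx.
  by rewrite [_ + _]addrA Pv ?Pu.
have : <<T>>%g \subset Group P_group.
  by rewrite gen_subG; apply/subsetP => h Th; rewrite inE; apply/forall_inP => x /perST->.
by move=> /subsetP TP x h Sx /TP; rewrite inE => /forall_inP->.
Qed.

Lemma periodic_bigcup (I : finType) (P : pred I) S (T : I -> {set G}) :
  (forall i, P i -> periodic S (T i)) -> periodic S (\bigcup_(i | P i) T i).
Proof. by move=> perS x h Sx /bigcupP[i Pi]; apply: perS. Qed.

Lemma periodicNr S K x h : periodic S K -> h \in K -> x + h \in S -> x \in S.
Proof.
by move=> perS Kh Sxh; have := perS _ (- h) Sxh; rewrite addrK; apply; rewrite zgroupN.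
Qed.

Lemma periodicC S K : periodic S K -> periodic (~: S) K.
Proof.
by move=> perS x h; rewrite !inE => Sx Kh; apply: contra Sx; apply: (periodicNr perS Kh).
Qed.

Lemma periodicU S1 S2 T : periodic S1 T -> periodic S2 T -> periodic (S1 :|: S2) T.
Proof.
by move=> per1 per2 x h /setUP[] Sx Th; rewrite inE; [rewrite per1 | rewrite per2 ?orbT].
Qed.

Lemma periodic_coset a K : periodic (coset_add a K) K.
Proof. by move=> x h; rewrite !in_coset_add addrAC; apply: zgroupD. Qed.

End AdditiveGroups.

Canonical diff_group_group (G : finZmodType) (S : {set G}) : {group G} :=
  Eval hnf in [group of diff_group S].

Section Bimodal.
Variables (G : finZmodType) (m : nat) (A : 'I_m -> {set G}).
Hypothesis Abim : bimodal A.

Local Notation U := (\bigcup_(j : 'I_m) A j).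
Local Notation HA i := (diff_group (A i)).

Lemma bimodal_disjoint (i j : 'I_m) x : i != j -> x \in A i -> x \in A j -> False.
Proof.
move=> ij Aix Ajx; have := Abim.1 i j ij.
by rewrite disjoints_subset => /subsetP/(_ x Aix); rewrite inE Ajx.
Qed.

(* Once one pair realises d = x - y, N_i(d) = |A i|, so the first projection
   of the pairs realising d is a bijection onto A i. *)
Lemma bimodal_partner (i j : 'I_m) x y x' : j != i -> x \in A i -> y \in A j ->
  x' \in A i -> exists2 j', j' != i & x' - (x - y) \in A j'.
Proof.
move=> ji Aix Ajy Aix'; set d := x - y.
have d_neq0 : d != 0.
  rewrite subr_eq0; apply/eqP => xy.
  by apply: (bimodal_disjoint ji Ajy); rewrite -xy.
set S := [set p : G * G | [&& p.1 \in A i,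
           [exists j : 'I_m, (j != i) && (p.2 \in A j)] & p.1 - p.2 == d]].
have Sxy : (x, y) \in S.
  by rewrite inE /= Aix eqxx andbT; apply/existsP; exists j; rewrite ji.
have card_S : #|S| = #|A i|.
  have [S0|//] := Abim.2 i d d_neq0.
  by move: S0; rewrite /Ncount -/S => /eqP; rewrite cards_eq0 => /eqP S0;
    rewrite S0 inE in Sxy.
have fst_inj : {in S &, injective fst}.
  move=> [p1 p2] [q1 q2]; rewrite !inE /= => /and3P[_ _ /eqP dp] /and3P[_ _ /eqP dq] /= pq.
  by rewrite -pq in dq *; congr (_, _); apply/oppr_inj/(addrI p1); rewrite dp dq.
have fst_S : fst @: S = A i.
  apply/eqP; rewrite eqEcard card_in_imset // card_S leqnn andbT.
  by apply/subsetP => _ /imsetP[p + ->]; rewrite inE => /and3P[].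
move: Aix'; rewrite -fst_S => /imsetP[[p1 p2]].
rewrite inE /= => /and3P[_ /existsP[j' /andP[j'i Aj'p2]] /eqP dp] ->.
by exists j'; rewrite // -dp opprB addrC subrK.
Qed.

Lemma bimodal_shift (i : 'I_m) x x' y : x \in A i -> x' \in A i ->
  y \in U :\: A i -> y + (x' - x) \in U :\: A i.
Proof.
move=> Aix Aix' /setDP[/bigcupP[j _ Ajy] Aiy].
have ji : j != i by apply: contraNneq Aiy => <-.
have [j' j'i] := bimodal_partner ji Aix Ajy Aix'.
rewrite opprB addrCA addrC => Aj'y'; rewrite inE (mem_bigcup Aj'y') andbT.
by apply/negP => /(bimodal_disjoint j'i Aj'y').
Qed.

Lemma bimodal_periodic (i : 'I_m) : periodic (U :\: A i) (HA i).
Proof.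
by apply: periodic_gen => y _ Uy /imset2P[x' x Aix' Aix ->]; apply: bimodal_shift.
Qed.

Lemma bimodal_coset_mem (i : 'I_m) a x : a \in A i -> x \in U ->
  x \in coset_add a (HA i) -> x \in A i.
Proof.
move=> Aia Ux; rewrite in_coset_add => Hxa; apply: contraT => Aix.
have : x + (a - x) \in U :\: A i.
  by apply: bimodal_periodic; rewrite ?inE ?Ux ?Aix // -opprB zgroupN.
by rewrite addrC subrK inE Aia.
Qed.

Lemma bimodal_coset_setD (i : 'I_m) a : a \in A i ->
  coset_add a (HA i) :\: A i = coset_add a (HA i) :\: U.
Proof.
move=> Aia; apply/setP => x; rewrite !inE.
case: (boolP (x \in coset_add a (HA i))) => ax; rewrite ?andbT ?andbF //.
apply/idP/idP; apply: contra; last exact: mem_bigcup.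
by move=> Ux; apply: bimodal_coset_mem Aia Ux ax.
Qed.

Lemma bimodal_periodic_gaps (i : 'I_m) a : a \in A i ->
  periodic (~: U :\: coset_add a (HA i)) (HA i).
Proof.
move=> Aia; have /subsetP A_coset := sub_coset_diff_group Aia.
have -> : ~: U :\: coset_add a (HA i) = ~: ((U :\: A i) :|: coset_add a (HA i)).
  apply/setP => x; rewrite !inE negb_or negb_and negbK.
  by case: (boolP (x \in A i)) => [/A_coset->|_] //=; rewrite andbC.
by apply/periodicC/periodicU; [apply: bimodal_periodic | apply: periodic_coset].
Qed.

Lemma deficient_coset_gap (i : 'I_m) a : (#|A i| < #|HA i|)%N -> a \in A i ->
  exists2 x, x \in coset_add a (HA i) & x \notin U.
Proof.
move=> ltAH Aia; have : ~~ (coset_add a (HA i) \subset A i).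
  by apply: contraTN ltAH => /subset_leq_card; rewrite card_coset_add leqNgt.
case/subsetPn => x ax Aix; exists x => //.
by apply: contra Aix => Ux; apply: bimodal_coset_mem Aia Ux ax.
Qed.

(* Fix h in H_j \ H_i.  If x is not in b + H_j, then x + h is a gap outside
   both cosets; translating it by H_i shows that any z in A_i outside b + H_j
   would itself be a gap, so A_i lies in b + H_j, and then so does x. *)
Lemma gaps_sub_coset_nsub (i j : 'I_m) a b x : i != j -> a \in A i -> b \in A j ->
    ~~ (HA j \subset HA i) -> x \in coset_add a (HA i) -> x \notin U ->
  x \in coset_add b (HA j).
Proof.
move=> ij Aia Ajb /subsetPn[h Hjh Hih] ax Ux; apply: contraT => bx.
have perEj := bimodal_periodic_gaps Ajb; have perEi := bimodal_periodic_gaps Aia.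
have Ej_xh : x + h \in ~: U :\: coset_add b (HA j) by apply: perEj; rewrite // !inE Ux bx.
have Ei_xh : x + h \in ~: U :\: coset_add a (HA i).
  by move: Ej_xh; rewrite !inE => /andP[_ ->]; rewrite andbT coset_addDr.
have /subsetP A_coset := sub_coset_diff_group Aia.
have Ai_bj : A i \subset coset_add b (HA j).
  apply/subsetP => z Aiz; apply: contraT => bz.
  have Ei_zh : z + h \in ~: U :\: coset_add a (HA i).
    by have := perEi _ _ Ei_xh (coset_addB ax (A_coset z Aiz)); rewrite addrAC subrKC.
  have Ej_zh : z + h \in ~: U :\: coset_add b (HA j).
    move: Ei_zh; rewrite !inE => /andP[_ ->]; rewrite andbT.
    by apply: contra bz; apply: periodicNr Hjh; apply: periodic_coset.
  have /setDP[] := periodicNr perEj Hjh Ej_zh.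
  by rewrite inE (mem_bigcup Aiz).
have /subsetP Hi_Hj := diff_group_sub_coset Ai_bj.
rewrite -(coset_add_eq (subsetP Ai_bj a Aia)) in bx.
by rewrite !in_coset_add in ax bx; rewrite Hi_Hj in bx.
Qed.

Lemma gaps_sub_coset (i j : 'I_m) a b x : (#|A j| < #|HA j|)%N -> i != j ->
    a \in A i -> b \in A j -> x \in coset_add a (HA i) -> x \notin U ->
  x \in coset_add b (HA j).
Proof.
move=> ltAHj ij Aia Ajb ax Ux.
have [Hj_Hi|nHj_Hi] := boolP (HA j \subset HA i); last first.
  exact: gaps_sub_coset_nsub ij Aia Ajb nHj_Hi ax Ux.
have [Hi_Hj|nHi_Hj] := boolP (HA i \subset HA j).
  have eqHij : HA i = HA j by apply/eqP; rewrite eqEsubset Hi_Hj.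
  rewrite eqHij in ax; apply: contraT => bx.
  have : a \in ~: U :\: coset_add b (HA j).
    rewrite -(subrKC x a); apply: (bimodal_periodic_gaps Ajb); first by rewrite !inE Ux bx.
    exact: coset_addB ax (coset_add_refl _ _).
  by move=> /setDP[]; rewrite inE (mem_bigcup Aia).
have [y by_ Uy] := deficient_coset_gap ltAHj Ajb.
have ay : y \in coset_add a (HA i).
  by apply: gaps_sub_coset_nsub by_ Uy; rewrite // eq_sym.
have ab : b \in coset_add a (HA i).
  rewrite -(coset_add_eq ay); apply: (subsetP (coset_addS y Hj_Hi)).
  by rewrite (coset_add_eq by_) coset_add_refl.
have Aib := bimodal_coset_mem Aia (mem_bigcup Ajb) ab.
by case: (bimodal_disjoint ij Aib Ajb).
Qed.

Lemma deficient_gaps_eq (i j : 'I_m) a b :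
    (#|A i| < #|HA i|)%N -> (#|A j| < #|HA j|)%N -> i != j -> a \in A i -> b \in A j ->
  coset_add a (HA i) :\: U = coset_add b (HA j) :\: U.
Proof.
move=> ltAHi ltAHj ij Aia Ajb.
apply/eqP; rewrite eqEsubset; apply/andP; split; apply/subsetP => x /setDP[cx Ux];
  rewrite inE Ux ?(gaps_sub_coset ltAHj ij Aia Ajb cx Ux) //.
by rewrite (gaps_sub_coset ltAHi _ Ajb Aia cx Ux) // eq_sym.
Qed.

End Bimodal.

Canonical sum_diff_groups_group (G : finZmodType) (m r : nat) (A : 'I_m -> {set G}) :
  {group G} := Eval hnf in [group of sum_diff_groups r A].

Section CanonicalPosition.
Variables (G : finZmodType) (m r : nat) (A : 'I_m -> {set G}) (D : {group G}).
Hypotheses (Abim : bimodal A) (A_neq0 : forall i, A i != set0).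
Hypothesis deficientE : forall i, (#|A i| < #|diff_group (A i)|)%N = (i < r)%N.
Variables (i0 : 'I_m) (a0 : G).
Hypotheses (i0_r : (i0 < r)%N) (A_a0 : a0 \in A i0).
Hypothesis D_def : D :=: coset_add a0 (diff_group (A i0)) :\: A i0.

Local Notation U := (\bigcup_(j : 'I_m) A j).
Local Notation HA i := (diff_group (A i)).
Local Notation H := (sum_diff_groups r A).

Lemma deficient_coset_gaps (i : 'I_m) a : (i < r)%N -> a \in A i ->
  coset_add a (HA i) :\: U = D.
Proof.
move=> ir Aia; rewrite D_def bimodal_coset_setD //.
have [eq_ii0 | ii0] := eqVneq i i0; last by apply: deficient_gaps_eq; rewrite ?deficientE.
by subst i; rewrite (coset_add_eq (subsetP (sub_coset_diff_group A_a0) a Aia)).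
Qed.

Lemma deficient_sub_diff_group (i : 'I_m) : (i < r)%N -> A i \subset HA i.
Proof.
move=> ir; apply/subsetP => a Aia.
have : (0 : G) \in D by apply: zgroup0.
by rewrite -(deficient_coset_gaps ir Aia) !inE in_coset_add sub0r zgroupN => /andP[].
Qed.

Lemma deficient_diff_group_gaps (i : 'I_m) : (i < r)%N -> HA i :\: U = D.
Proof.
move=> ir; have /set0Pn[a Aia] := A_neq0 i.
have H_a := subsetP (deficient_sub_diff_group ir) a Aia.
by rewrite -(deficient_coset_gaps ir Aia) coset_add_id.
Qed.

Lemma D_sub_diff_group (i : 'I_m) : (i < r)%N -> D \subset HA i.
Proof. by move=> ir; rewrite -(deficient_diff_group_gaps ir) subsetDl. Qed.

Lemma D_notin_bigcup x : x \in D -> x \notin U.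
Proof. by rewrite -(deficient_diff_group_gaps i0_r) => /setDP[]. Qed.

Lemma deficient_coset_mem (i : 'I_m) x : (i < r)%N -> x \in U -> x \in HA i -> x \in A i.
Proof.
move=> ir Ux Hx; have /set0Pn[a Aia] := A_neq0 i.
apply: (bimodal_coset_mem Abim Aia Ux).
by rewrite coset_add_id // (subsetP (deficient_sub_diff_group ir)).
Qed.

Lemma deficient_setD (i : 'I_m) : (i < r)%N -> A i = HA i :\: D.
Proof.
move=> ir; apply/setP => x; rewrite inE.
have [Ax | nAx] := boolP (x \in A i).
  rewrite (subsetP (deficient_sub_diff_group ir)) // andbT.
  by apply/esym/negP => /D_notin_bigcup; rewrite (mem_bigcup Ax).
apply/esym/negbTE; apply: contra nAx => /andP[nDx Hx]; apply: deficient_coset_mem => //.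
by apply: contraR nDx => nUx; rewrite -(deficient_diff_group_gaps ir) inE nUx.
Qed.

Lemma deficient_diff_groupI (i j : 'I_m) : (i < r)%N -> (j < r)%N -> i != j ->
  HA i :&: HA j = D.
Proof.
move=> ir jr ij; apply/eqP; rewrite eqEsubset; apply/andP; split; last first.
  by rewrite subsetI !D_sub_diff_group.
apply/subsetP => x /setIP[Hix Hjx]; have [Ux | nUx] := boolP (x \in U).
  have Aix := deficient_coset_mem ir Ux Hix; have Ajx := deficient_coset_mem jr Ux Hjx.
  by case: (bimodal_disjoint Abim ij Aix Ajx).
by rewrite -(deficient_diff_group_gaps ir) inE nUx.
Qed.

Lemma nondeficient_coset (i : 'I_m) a : (r <= i)%N -> a \in A i ->
  A i = coset_add a (HA i).
Proof. by move=> ri; apply: coset_diff_groupE; rewrite leqNgt deficientE -leqNgt. Qed.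

Lemma nondeficient_periodic_setC (i : 'I_m) : (r <= i)%N -> periodic (~: U) (HA i).
Proof.
move=> ri; have /set0Pn[a Aia] := A_neq0 i.
have := bimodal_periodic_gaps Abim Aia; rewrite -nondeficient_coset //.
suff -> : ~: U :\: A i = ~: U by [].
by apply/setDidPl; rewrite disjoint_sym disjoints_subset setCK; apply/subsetP => x /mem_bigcup.
Qed.

Lemma nondeficient_diff_group_sub (i : 'I_m) : (r <= i)%N -> HA i \subset D.
Proof.
move=> ri; apply/subsetP => h Hh.
have nUh : h \in ~: U.
  have nU0 : (0 : G) \in ~: U by rewrite inE D_notin_bigcup ?zgroup0.
  by have := nondeficient_periodic_setC ri nU0 Hh; rewrite add0r.
rewrite -(deficient_diff_group_gaps i0_r) inE -in_setC nUh /=.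
apply: contraT => nH0h.
have H0a0 := subsetP (deficient_sub_diff_group i0_r) a0 A_a0.
have perE0 := bimodal_periodic_gaps Abim A_a0; rewrite coset_add_id // in perE0.
have : h + a0 \in ~: U :\: HA i0 by apply: perE0; rewrite // inE nH0h.
rewrite addrC => /setDP[/(periodicNr (nondeficient_periodic_setC ri) Hh)].
by rewrite inE (mem_bigcup A_a0).
Qed.

Lemma diff_group_sub_sum (i : 'I_m) : (i < r)%N -> HA i \subset H.
Proof. by move=> ir; apply/sub_gen/(bigcup_sup i ir). Qed.

Lemma deficient_sub_sum (i : 'I_m) : (i < r)%N -> A i \subset H.
Proof.
by move=> ir; apply: subset_trans (deficient_sub_diff_group ir) (diff_group_sub_sum ir).
Qed.

Lemma D_sub_sum : D \subset H.
Proof. exact: subset_trans (D_sub_diff_group i0_r) (diff_group_sub_sum i0_r). Qed.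

Lemma periodic_gaps_sum : periodic (~: U :\: D) H.
Proof.
apply/periodic_gen/periodic_bigcup => i ir; have /set0Pn[a Aia] := A_neq0 i.
have -> : ~: U :\: D = ~: U :\: coset_add a (HA i).
  rewrite coset_add_id ?(subsetP (deficient_sub_diff_group ir)) //.
  apply/setP => x; rewrite !inE -(deficient_diff_group_gaps ir) inE.
  by case: (x \in U); rewrite ?andbF ?andbT.
exact: bimodal_periodic_gaps.
Qed.

Lemma sum_setD_sub_bigcup : H :\: D \subset U.
Proof.
apply/subsetP => x /setDP[Hx nDx]; apply: contraT => nUx.
have gap_x : x \in ~: U :\: D by rewrite !inE nUx nDx.
have Hnx : - x \in H by rewrite zgroupN.
by have := periodic_gaps_sum gap_x Hnx; rewrite subrr inE zgroup0.
Qed.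

Lemma nondeficient_sub_coset_sum (i : 'I_m) a : (r <= i)%N -> a \in A i ->
  A i \subset coset_add a H.
Proof.
move=> ri Aia; rewrite {1}(nondeficient_coset ri Aia); apply: coset_addS.
exact: subset_trans (nondeficient_diff_group_sub ri) D_sub_sum.
Qed.

Lemma nondeficient_subgroup_coset (i : 'I_m) : (r <= i)%N ->
  exists (K : {group G}) x, K \subset D /\ A i = coset_add x K.
Proof.
move=> ri; have /set0Pn[a Aia] := A_neq0 i; exists (diff_group_group (A i)), a.
by rewrite nondeficient_diff_group_sub -?nondeficient_coset.
Qed.

Lemma nondeficient_coset_sub_sum (i : 'I_m) : (r <= i)%N ->
  exists (K : {group G}) x y, A i = coset_add x K /\ A i \subset coset_add y H.
Proof.
move=> ri; have /set0Pn[a Aia] := A_neq0 i; exists (diff_group_group (A i)), a, a.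
by rewrite nondeficient_sub_coset_sum -?nondeficient_coset.
Qed.

Lemma nondeficient_sub_sum (i : 'I_m) a : (r <= i)%N -> a \in A i -> a \in H ->
  A i \subset H.
Proof. by move=> ri Aia Ha; rewrite -(coset_add_id Ha) nondeficient_sub_coset_sum. Qed.

Local Notation inside i := ((i < r)%N || (A i \subset H)).

Lemma sum_setD_bigcup : H :\: D = \bigcup_(i : 'I_m | inside i) A i.
Proof.
apply/eqP; rewrite eqEsubset; apply/andP; split; apply/subsetP => x.
  move=> HDx; have /setDP[Hx _] := HDx.
  have /bigcupP[i _ Aix] := subsetP sum_setD_sub_bigcup x HDx.
  apply/bigcupP; exists i => //; have [//|ri] := ltnP i r.
  by rewrite (nondeficient_sub_sum ri Aix).
case/bigcupP => i A_H Aix; rewrite inE (contraL (@D_notin_bigcup x) (mem_bigcup Aix)) /=.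
by case/orP: A_H => [/deficient_sub_sum | ] /subsetP->.
Qed.

Lemma periodic_bigcup_outside : periodic (\bigcup_(i : 'I_m | ~~ inside i) A i) H.
Proof.
move=> x h /bigcupP[i]; rewrite negb_or -leqNgt => /andP[ri nA_H] Aix Hh.
have nHxh : x + h \notin H.
  by apply: contra nA_H => Hxh; apply: (nondeficient_sub_sum ri Aix); rewrite -(zgroupDr _ Hh).
have Uxh : x + h \in U.
  apply: contraT => nUxh; have gap_xh : x + h \in ~: U :\: D.
    by rewrite !inE nUxh andbT; apply: contra nHxh; apply: (subsetP D_sub_sum).
  by have /setDP[] := periodicNr periodic_gaps_sum Hh gap_xh; rewrite inE (mem_bigcup Aix).
have /bigcupP[j _ Ajxh] := Uxh; apply/bigcupP; exists j => //.
rewrite negb_or; apply/andP; split; last by apply: contra nHxh => /subsetP->.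
by apply: contra nHxh => /deficient_sub_sum/subsetP->.
Qed.

End CanonicalPosition.

Unset Implicit Arguments.

Theorem theorem3p10 (G : finZmodType) (m r : nat) (A : 'I_m -> {set G})
  (D : {set G})
  (Hbim : bimodal A)
  (Hne : forall i : 'I_m, A i != set0)
  (Hr2 : (2 <= r)%N) (Hrm : (r <= m)%N)
  (Hlab : forall i : 'I_m, (#|A i| < #|diff_group (A i)|)%N = (i < r)%N)
  (HD : forall (i : 'I_m) (a : G), nat_of_ord i = 0%N -> a \in A i ->
          D = coset_add a (diff_group (A i)) :\: A i)
  (Hcanon : group_set D) :
  let H := sum_diff_groups r A in
  (* (1) *)
  (forall i j : 'I_m, (i < r)%N -> (j < r)%N -> i != j ->
      diff_group (A i) :&: diff_group (A j) = D) /\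
  (forall i : 'I_m, (i < r)%N -> A i = diff_group (A i) :\: D) /\
  (* (2) *)
  (forall i : 'I_m, (r <= i)%N ->
      exists (K : {group G}) (x : G), K \subset D /\ A i = coset_add x K) /\
  (* (3) and (4) *)
  H :\: D \subset \bigcup_(i : 'I_m) A i /\
  exists (k : nat) (s : {perm 'I_m}),
    [/\ (r <= k <= m)%N,
        (forall i : 'I_m, (i < r)%N -> s i = i),
        H :\: D = \bigcup_(i : 'I_m | (i < k)%N) A (s i) &
        ((k < m)%N ->
          (forall x h : G, x \in \bigcup_(i : 'I_m | (k <= i)%N) A (s i) ->
              h \in H -> x + h \in \bigcup_(i : 'I_m | (k <= i)%N) A (s i)) /\
          (forall i : 'I_m, (k <= i)%N ->
              exists (K : {group G}) (x y : G),
                A (s i) = coset_add x K /\ A (s i) \subset coset_add y H))].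
Proof.
move=> H; subst H.
have m_gt0 : (0 < m)%N by apply: leq_trans Hrm; apply: leq_trans Hr2.
pose i0 : 'I_m := Ordinal m_gt0; have i0_r : (i0 < r)%N by apply: leq_trans Hr2.
have /set0Pn[a0 A_a0] := Hne i0.
pose DG : {group G} := Group Hcanon.
have D_def : DG :=: coset_add a0 (diff_group (A i0)) :\: A i0 := HD i0 a0 erefl A_a0.
have [i /= -> // | k [s [rk s_id s_inside]]] :=
  perm_pred_prefix (p := fun i => (i < r)%N || (A i \subset sum_diff_groups r A)) Hrm.
have outside_r (i : 'I_m) : (k <= i)%N -> (r <= s i)%N.
  by rewrite leqNgt -s_inside negb_or -leqNgt => /andP[].
split; first exact: (deficient_diff_groupI (D := DG) Hbim Hne Hlab i0_r A_a0 D_def).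
split; first exact: (deficient_setD (D := DG) Hbim Hne Hlab i0_r A_a0 D_def).
split; first exact: (nondeficient_subgroup_coset (D := DG) Hbim Hne Hlab i0_r A_a0 D_def).
split; first exact: (sum_setD_sub_bigcup (D := DG) Hbim Hne Hlab i0_r A_a0 D_def).
exists k, s; split=> //.
  rewrite (sum_setD_bigcup (D := DG) Hbim Hne Hlab i0_r A_a0 D_def).
  by rewrite (reindex_inj (@perm_inj _ s)); apply: eq_bigl.
move=> _; split.
  have -> : \bigcup_(i : 'I_m | (k <= i)%N) A (s i) =
            \bigcup_(i : 'I_m | ~~ ((i < r)%N || (A i \subset sum_diff_groups r A))) A i.
    rewrite [RHS](reindex_inj (@perm_inj _ s)).
    by apply: eq_bigl => i; rewrite s_inside -leqNgt.
  exact: (periodic_bigcup_outside (D := DG) Hbim Hne Hlab i0_r A_a0 D_def).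
move=> i /outside_r.
exact: (nondeficient_coset_sub_sum (D := DG) Hbim Hne Hlab i0_r A_a0 D_def).
Qed.
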